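(* Let $(A,B)$ be a finite-dimensional associative superalgebra over an algebraically closed field $\mathbb{K}$ of characteristic zero endowed with a homogeneous symmetric structure $B$, and let $I$ be a minimal graded two-sided ideal of $A$. Then either $I$ is simple, or $I$ has null product and $AI=I=IA$, or $I=\mathbb{K}x$ where $x$ is a homogeneous element of $\mathrm{Ann}(A)$.
   Context: A superalgebra is $\mathbb{Z}_2$-graded, $A=A_{\bar 0}\oplus A_{\bar 1}$, $A_\alpha A_\beta\subseteq A_{\alpha+\beta}$. A homogeneous symmetric structure on $A$ is a bilinear form $B$ which is either even ($B(A_{\bar 0},A_{\bar 1})=0$) or odd ($B(A_{\bar 0},A_{\bar 0})=B(A_{\bar 1},A_{\bar 1})=0$), and is supersymmetric ($B(x,y)=(-1)^{|x||y|}B(y,x)$ for homogeneous $x,y$), associative ($B(xy,z)=B(x,yz)$) and non-degenerate. A graded two-sided ideal $I$ is minimal if $I\notin\{\{0\},A\}$ and every graded two-sided ideal of $A$ contained in $I$ is $\{0\}$ or $I$. A superalgebra is simple if its product is non-zero and its only graded two-sided ideals are $\{0\}$ and itself. $\mathrm{Ann}(A)=\{x\in A: xA=Ax=\{0\}\}$. *)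

(* A finite-dimensional (not necessarily unital) associative
   superalgebra over K is modelled as a finite-dimensional K-vector space
   V : vectType K with a bilinear product mul, and a Z/2-grading given by two
   subspaces A0 (even part) and A1 (odd part) with V = A0 (+) A1. *)
From HB Require Import structures.
From mathcomp Require Import all_boot all_order all_algebra.
Set Implicit Arguments. Unset Strict Implicit. Unset Printing Implicit Defensive.
Import GRing.Theory.
Local Open Scope ring_scope.

Section Super.
Variables (K : fieldType) (V : vectType K).

Definition bilinear_op (W : lmodType K) (f : V -> V -> W) : Prop :=
  (forall (a : K) (x y z : V), f (a *: x + y) z = a *: f x z + f y z) /\
  (forall (a : K) (x y z : V), f z (a *: x + y) = a *: f z x + f z y).

Definition is_assoc_superalgebra (mul : V -> V -> V) (A0 A1 : {vspace V}) : Prop :=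
  [/\ bilinear_op mul,
      (forall x y z, mul (mul x y) z = mul x (mul y z)),
      (A0 + A1)%VS = fullv /\ directv (A0 + A1),
      (forall x y, x \in A0 -> y \in A0 -> mul x y \in A0) /\
      (forall x y, x \in A0 -> y \in A1 -> mul x y \in A1) &
      (forall x y, x \in A1 -> y \in A0 -> mul x y \in A1) /\
      (forall x y, x \in A1 -> y \in A1 -> mul x y \in A0)].

Definition homogeneous (A0 A1 : {vspace V}) (x : V) : Prop :=
  x \in A0 \/ x \in A1.

Definition is_homogeneous_symmetric_structure (mul : V -> V -> V)
    (A0 A1 : {vspace V}) (B : V -> V -> K^o) : Prop :=
  [/\ bilinear_op B,
      (forall x y, x \in A0 -> y \in A1 -> B x y = 0) \/
      ((forall x y, x \in A0 -> y \in A0 -> B x y = 0) /\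
       (forall x y, x \in A1 -> y \in A1 -> B x y = 0)),
      (* supersymmetric: B x y = (-1)^{|x||y|} B y x *)
      [/\ (forall x y, x \in A0 -> y \in A0 -> B x y = B y x),
          (forall x y, x \in A0 -> y \in A1 -> B x y = B y x),
          (forall x y, x \in A1 -> y \in A0 -> B x y = B y x) &
          (forall x y, x \in A1 -> y \in A1 -> B x y = - B y x)],
      (forall x y z, B (mul x y) z = B x (mul y z)) &
      (forall x, (forall y, B x y = 0) -> x = 0)].

Definition graded_subspace (A0 A1 U : {vspace V}) : Prop :=
  U = (U :&: A0 + U :&: A1)%VS.

(* J is a two-sided ideal of the subalgebra S (S = fullv gives ideals of A) *)
Definition two_sided_ideal_in (mul : V -> V -> V) (S J : {vspace V}) : Prop :=
  forall a x, a \in S -> x \in J -> mul a x \in J /\ mul x a \in J.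

Definition graded_ideal (mul : V -> V -> V) (A0 A1 I : {vspace V}) : Prop :=
  graded_subspace A0 A1 I /\ two_sided_ideal_in mul fullv I.

Definition minimal_graded_ideal (mul : V -> V -> V) (A0 A1 I : {vspace V}) : Prop :=
  [/\ graded_ideal mul A0 A1 I, I != 0%VS, I != fullv &
      forall J, graded_ideal mul A0 A1 J -> (J <= I)%VS -> J = 0%VS \/ J = I].

Definition simple_sub (mul : V -> V -> V) (A0 A1 I : {vspace V}) : Prop :=
  (exists x y, [/\ x \in I, y \in I & mul x y != 0]) /\
  (forall J, (J <= I)%VS ->
     graded_subspace (I :&: A0) (I :&: A1) J ->
     two_sided_ideal_in mul I J -> J = 0%VS \/ J = I).

Definition null_product (mul : V -> V -> V) (I : {vspace V}) : Prop :=
  forall x y, x \in I -> y \in I -> mul x y = 0.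

Definition prodv (mul : V -> V -> V) (U W : {vspace V}) : {vspace V} :=
  (\sum_(u <- vbasis U) \sum_(w <- vbasis W) <[mul u w]>)%VS.

Definition annihilator_elt (mul : V -> V -> V) (x : V) : Prop :=
  forall a, mul x a = 0 /\ mul a x = 0.

End Super.

(* If I I = I, a graded ideal J of the superalgebra I generates the graded ideal
   J + AJ + JA + AJA of A, which lies in I; by minimality it is 0 (so J = 0) or
   I, and then I = I I I ⊆ J because I (J + AJ + JA + AJA) I ⊆ J.
   Otherwise I I = 0, and the graded ideals AI and IA lie in I.  Unless both
   equal I, one of them vanishes; the invariant form transfers the vanishing to
   the other side, so I ⊆ Ann(A) and any homogeneous line in I is already a
   graded ideal. *)
From HB Require Import structures.
From mathcomp Require Import all_boot all_order all_algebra.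
From Stdlib Require Import Classical.
Set Implicit Arguments. Unset Strict Implicit. Unset Printing Implicit Defensive.
Import GRing.Theory.
Local Open Scope ring_scope.

Section Bilinear.
Variables (K : fieldType) (V : vectType K) (W : lmodType K) (f : V -> V -> W).
Hypothesis f_bil : bilinear_op f.

Lemma bilDl x y z : f (x + y) z = f x z + f y z.
Proof. by have := f_bil.1 1 x y z; rewrite !scale1r. Qed.

Lemma bilDr x y z : f z (x + y) = f z x + f z y.
Proof. by have := f_bil.2 1 x y z; rewrite !scale1r. Qed.

Lemma bil0l z : f 0 z = 0.
Proof. by apply/eqP; rewrite -[f 0 z](addrK (f 0 z)) -bilDl addr0 subrr. Qed.

Lemma bil0r z : f z 0 = 0.
Proof. by apply/eqP; rewrite -[f z 0](addrK (f z 0)) -bilDr addr0 subrr. Qed.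

Lemma bilZl a x z : f (a *: x) z = a *: f x z.
Proof. by have := f_bil.1 a x 0 z; rewrite !addr0 bil0l addr0. Qed.

Lemma bilZr a x z : f z (a *: x) = a *: f z x.
Proof. by have := f_bil.2 a x 0 z; rewrite !addr0 bil0r addr0. Qed.

End Bilinear.

Section VectorSpaces.
Variables (K : fieldType) (V : vectType K).
Implicit Types (U W X : {vspace V}) (P : V -> Prop).

Lemma memv_vbasis_ind P U :
  P 0 -> (forall x y, P x -> P y -> P (x + y)) -> (forall a x, P x -> P (a *: x)) ->
  (forall b, b \in vbasis U -> P b) -> forall u, u \in U -> P u.
Proof.
move=> P0 PD PZ Pb u /coord_vbasis ->.
by apply: (big_ind P) => // i _; apply/PZ/Pb/mem_nth; rewrite size_tuple.
Qed.

Section Product.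
Variable mul : V -> V -> V.
Hypothesis mul_bil : bilinear_op mul.

Lemma prodv_ind P U W :
  P 0 -> (forall x y, P x -> P y -> P (x + y)) -> (forall a x, P x -> P (a *: x)) ->
  (forall u w, u \in U -> w \in W -> P (mul u w)) ->
  forall y, y \in prodv mul U W -> P y.
Proof.
move=> P0 PD PZ Pmul; rewrite /prodv big_seq.
elim/big_rec: _ => [|u S Uu IHS] y; first by rewrite memv0 => /eqP ->.
case/memv_addP=> y1 Sy1 [y2 /IHS Py2 ->]; apply: (PD _ _ _ Py2); move: y1 Sy1.
rewrite big_seq; elim/big_rec: _ => [|w T Ww IHT] y1; first by rewrite memv0 => /eqP ->.
case/memv_addP=> _ /vlineP[k ->] [y3 /IHT Py3 ->]; apply: (PD _ _ _ Py3).
by apply/PZ/Pmul; apply: vbasis_mem.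
Qed.

Lemma prodv_linear_sub (g : V -> V) U W X :
  (forall k x y, g (k *: x + y) = k *: g x + g y) ->
  (forall u w, u \in U -> w \in W -> g (mul u w) \in X) ->
  forall y, y \in prodv mul U W -> g y \in X.
Proof.
move=> g_lin gX; have g0 : g 0 = 0.
  by apply: (addIr (g 0)); rewrite add0r -{1}(scale1r (g 0)) -g_lin scaler0 addr0.
apply: prodv_ind gX; first by rewrite g0 mem0v.
- by move=> x y gx gy; rewrite -[x]scale1r g_lin scale1r memvD.
- by move=> a x gx; rewrite -[a *: x]addr0 g_lin g0 addr0 memvZ.
Qed.

Lemma prodv_sub U W X :
  (forall u w, u \in U -> w \in W -> mul u w \in X) -> (prodv mul U W <= X)%VS.
Proof. by move=> mulX; apply/subvP; apply: (@prodv_linear_sub id). Qed.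

Lemma prodv_neq0_witness U W : prodv mul U W != 0%VS ->
  exists u w, [/\ u \in U, w \in W & mul u w != 0].
Proof.
move=> nzUW; apply: NNPP => no_witness; move: nzUW; rewrite -subv0 => /negP; apply.
apply: prodv_sub => u w Uu Ww; rewrite memv0; apply/negPn/negP => nz.
by apply: no_witness; exists u, w.
Qed.

Lemma mem_prodv U W u w : u \in U -> w \in W -> mul u w \in prodv mul U W.
Proof.
have basis_mem b c : b \in vbasis U -> c \in vbasis W -> mul b c \in prodv mul U W.
  move=> Ub Wc; rewrite /prodv (big_rem b Ub) (big_rem c Wc) /= -addvA.
  by apply/(subvP (addvSl _ _))/memv_line.
move=> Uu Ww; move: u Uu; apply: memv_vbasis_ind => [|x y|a x|b Ub].
- by rewrite bil0l // mem0v.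
- by rewrite bilDl //; apply: memvD.
- by rewrite bilZl //; apply: memvZ.
move: w Ww; apply: memv_vbasis_ind => [|x y|a x|c Wc]; last exact: basis_mem.
- by rewrite bil0r // mem0v.
- by rewrite bilDr //; apply: memvD.
- by rewrite bilZr //; apply: memvZ.
Qed.

End Product.

Section Grading.
Variables A0 A1 : {vspace V}.
Hypothesis A_full : (A0 + A1)%VS = fullv.
Local Notation graded := (graded_subspace A0 A1).
Local Notation homogeneous := (homogeneous A0 A1).

Lemma graded_subspace_of_subv U : (U <= U :&: A0 + U :&: A1)%VS -> graded U.
Proof. by move=> sU; apply/eqP; rewrite eqEsubv sU subv_add !capvSl. Qed.

Lemma graded_decomp U u : graded U -> u \in U ->
  exists u0 u1, [/\ u0 \in (U :&: A0)%VS, u1 \in (U :&: A1)%VS & u = u0 + u1].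
Proof. by move=> gU; rewrite {1}gU => /memv_addP[u0 Uu0 [u1 Uu1 ->]]; exists u0, u1. Qed.

Lemma graded_fullv : graded fullv.
Proof. by apply: graded_subspace_of_subv; rewrite !capfv A_full subvv. Qed.

Lemma graded_addv U W : graded U -> graded W -> graded (U + W)%VS.
Proof.
move=> gU gW; apply: graded_subspace_of_subv; rewrite {1}gU {1}gW.
rewrite [X in (X <= _)%VS](Monoid.mulmACA (@addv _ V)).
by apply: addvS; rewrite subv_cap addvS ?capvSl // subv_add !capvSr.
Qed.

Lemma graded_line x : homogeneous x -> graded <[x]>%VS.
Proof.
move=> hx; apply: graded_subspace_of_subv; apply/subvP=> y xy.
case/vlineP: xy => k ->.
case: hx => xA; [apply: (subvP (addvSl _ _)) | apply: (subvP (addvSr _ _))];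
  by apply/memv_capP; split; apply: memvZ; rewrite ?memv_line.
Qed.

Lemma graded_homogeneous_nz U : graded U -> U != 0%VS ->
  exists x, [/\ x \in U, homogeneous x & x != 0].
Proof.
move=> gU; have pick_nz X : (U :&: X)%VS != 0%VS -> exists2 x, x \in U & x \in X /\ x != 0.
  move=> nzX; have /memv_capP[UX XX] := memv_pick (U :&: X)%VS.
  by exists (vpick (U :&: X)%VS); rewrite ?vpick0.
have [U0|/pick_nz[x Ux [A0x nzx]]] := eqVneq (U :&: A0)%VS 0%VS; last first.
  by exists x; split; [|left|].
have [U1|/pick_nz[x Ux [A1x nzx]]] := eqVneq (U :&: A1)%VS 0%VS; last first.
  by exists x; split; [|right|].
by rewrite gU U0 U1 addv0 eqxx.
Qed.

End Grading.
End VectorSpaces.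

Section Superalgebra.
Variables (K : fieldType) (V : vectType K) (mul : V -> V -> V) (A0 A1 : {vspace V}).
Hypothesis superA : is_assoc_superalgebra mul A0 A1.
Local Notation graded := (graded_subspace A0 A1).
Local Notation homogeneous := (homogeneous A0 A1).
Local Notation prodv := (prodv mul).
Implicit Types (I J U W : {vspace V}).

Let mul_bil : bilinear_op mul. Proof. by case: superA. Qed.
Let mulA x y z : mul (mul x y) z = mul x (mul y z). Proof. by case: superA. Qed.
Let A_full : (A0 + A1)%VS = fullv. Proof. by case: superA => _ _ []. Qed.

Lemma graded_prodv U W : graded U -> graded W -> graded (prodv U W).
Proof.
case: superA => _ _ _ [G00 G01] [G10 G11] gU gW.
apply: graded_subspace_of_subv; apply: prodv_sub => // u w Uu Ww.
have [u0 [u1 [/memv_capP[Uu0 Au0] /memv_capP[Uu1 Au1] ->]]] := graded_decomp gU Uu.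
have [w0 [w1 [/memv_capP[Ww0 Aw0] /memv_capP[Ww1 Aw1] ->]]] := graded_decomp gW Ww.
have even x : x \in prodv U W -> x \in A0 -> x \in (prodv U W :&: A0 + prodv U W :&: A1)%VS.
  by move=> ? ?; apply/(subvP (addvSl _ _))/memv_capP.
have odd x : x \in prodv U W -> x \in A1 -> x \in (prodv U W :&: A0 + prodv U W :&: A1)%VS.
  by move=> ? ?; apply/(subvP (addvSr _ _))/memv_capP.
rewrite !(bilDl mul_bil) !(bilDr mul_bil); apply: memvD; apply: memvD.
- by apply: even; rewrite ?(mem_prodv mul_bil) ?G00.
- by apply: odd; rewrite ?(mem_prodv mul_bil) ?G01.
- by apply: odd; rewrite ?(mem_prodv mul_bil) ?G10.
- by apply: even; rewrite ?(mem_prodv mul_bil) ?G11.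
Qed.

Definition left_ideal U := forall a u, u \in U -> mul a u \in U.
Definition right_ideal U := forall a u, u \in U -> mul u a \in U.

Lemma two_sided_idealP U :
  two_sided_ideal_in mul fullv U <-> left_ideal U /\ right_ideal U.
Proof.
split=> [idU | [lU rU] a u _ Uu]; last by split; [apply: lU | apply: rU].
by split=> a u Uu; have [] := idU a u (memvf a) Uu.
Qed.

Lemma left_ideal_prodv U W : left_ideal U -> left_ideal (prodv U W).
Proof.
move=> lU a; apply: prodv_linear_sub => [k x y|u w Uu Ww]; first exact: mul_bil.2.
by rewrite -mulA (mem_prodv mul_bil) ?lU.
Qed.

Lemma right_ideal_prodv U W : right_ideal W -> right_ideal (prodv U W).
Proof.
move=> rW a; apply: (prodv_linear_sub (g := mul^~ a)) => [|u w Uu Ww].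
  by move=> k x y; apply: mul_bil.1.
by rewrite mulA (mem_prodv mul_bil) ?rW.
Qed.

Lemma left_ideal_fullv : left_ideal fullv. Proof. by move=> *; apply: memvf. Qed.
Lemma right_ideal_fullv : right_ideal fullv. Proof. by move=> *; apply: memvf. Qed.

Lemma prodv_sub_left_ideal I U W : left_ideal I -> (W <= I)%VS -> (prodv U W <= I)%VS.
Proof. by move=> lI /subvP WI; apply: prodv_sub => u w _ /WI; apply: lI. Qed.

Lemma prodv_sub_right_ideal I U W : right_ideal I -> (U <= I)%VS -> (prodv U W <= I)%VS.
Proof. by move=> rI /subvP UI; apply: prodv_sub => u w /UI Iu _; apply: rI. Qed.

Lemma graded_ideal_prodv U W : graded U -> graded W -> left_ideal U -> right_ideal W ->
  graded_ideal mul A0 A1 (prodv U W).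
Proof.
move=> gU gW lU rW; split; first exact: graded_prodv.
by apply/two_sided_idealP; split; [apply: left_ideal_prodv | apply: right_ideal_prodv].
Qed.

Definition ideal_hull J :=
  (J + prodv fullv J + prodv J fullv + prodv (prodv fullv J) fullv)%VS.

Lemma ideal_hullP J s : s \in ideal_hull J -> exists s1 s2 s3 s4,
  [/\ s1 \in J, s2 \in prodv fullv J, s3 \in prodv J fullv,
      s4 \in prodv (prodv fullv J) fullv & s = s1 + s2 + s3 + s4].
Proof.
case/memv_addP=> _ /memv_addP[_ /memv_addP[s1 Js1 [s2 AJs2 ->]] [s3 JAs3 ->]] [s4 AJAs4 ->].
by exists s1, s2, s3, s4.
Qed.

Lemma ideal_hull_subv J :
  [/\ (J <= ideal_hull J)%VS, (prodv fullv J <= ideal_hull J)%VS,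
      (prodv J fullv <= ideal_hull J)%VS & (prodv (prodv fullv J) fullv <= ideal_hull J)%VS].
Proof.
by move: (subvv (ideal_hull J)); rewrite {1}/ideal_hull !subv_add => /andP[/andP[/andP[]]].
Qed.

Lemma graded_ideal_hull J : graded J -> graded_ideal mul A0 A1 (ideal_hull J).
Proof.
have [_ /subvP sAJ /subvP sJA /subvP sAJA] := ideal_hull_subv J.
move=> gJ; have gA := graded_fullv A_full; have gAJ := graded_prodv gA gJ; split.
  apply: graded_addv (graded_prodv gAJ gA); apply: graded_addv (graded_prodv gJ gA).
  exact: graded_addv.
apply/two_sided_idealP; split=> a s /ideal_hullP[s1 [s2 [s3 [s4 [Js1 AJs2 JAs3 AJAs4 ->]]]]].
  rewrite !(bilDr mul_bil); apply: memvD; [apply: memvD; [apply: memvD|]|].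
  - by apply/sAJ/(mem_prodv mul_bil)/Js1/memvf.
  - exact/sAJ/left_ideal_prodv/AJs2/left_ideal_fullv.
  - apply: sAJA; move: s3 JAs3 {AJAs4}; apply: prodv_linear_sub => [k x y|j b Jj _].
      exact: mul_bil.2.
    by rewrite -mulA !(mem_prodv mul_bil) ?memvf.
  - exact/sAJA/left_ideal_prodv/AJAs4/left_ideal_prodv/left_ideal_fullv.
rewrite !(bilDl mul_bil); apply: memvD; [apply: memvD; [apply: memvD|]|].
- by apply/sJA/(mem_prodv mul_bil)/memvf.
- by apply/sAJA/(mem_prodv mul_bil)/memvf.
- exact/sJA/right_ideal_prodv/JAs3/right_ideal_fullv.
- exact/sAJA/right_ideal_prodv/AJAs4/right_ideal_fullv.
Qed.

Lemma ideal_hull_sub I J : left_ideal I -> right_ideal I -> (J <= I)%VS ->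
  (ideal_hull J <= I)%VS.
Proof.
move=> lI rI sJI; have sAJI := prodv_sub_left_ideal fullv lI sJI.
by rewrite /ideal_hull !subv_add sJI sAJI !(prodv_sub_right_ideal fullv rI).
Qed.

Lemma mul_ideal_hull I J u s t : left_ideal I -> right_ideal I -> (J <= I)%VS ->
  two_sided_ideal_in mul I J ->
  u \in I -> s \in ideal_hull J -> t \in I -> mul u (mul s t) \in J.
Proof.
move=> lI rI /subvP sJI idJ Iu.
case/ideal_hullP=> [s1 [s2 [s3 [s4 [Js1 AJs2 JAs3 AJAs4 ->]]]]] It.
have mulIJ v j : v \in I -> j \in J -> mul v j \in J.
  by move=> Iv Jj; have [] := idJ v j Iv Jj.
have mulJI v j : v \in I -> j \in J -> mul j v \in J.
  by move=> Iv Jj; have [] := idJ v j Iv Jj.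
have linear_mid v r k x y :
    mul v (mul (k *: x + y) r) = k *: mul v (mul x r) + mul v (mul y r).
  by rewrite mul_bil.1 mul_bil.2.
have AJ_case v x r : v \in I -> r \in I -> x \in prodv fullv J -> mul v (mul x r) \in J.
  move=> Iv Ir; apply: (prodv_linear_sub (linear_mid v r)) => b j _ Jj.
  by rewrite mulA -mulA mulIJ ?rI // mulJI.
rewrite !(bilDl mul_bil) !(bilDr mul_bil); apply: memvD; [apply: memvD; [apply: memvD|]|].
- by rewrite mulIJ ?mulJI.
- exact: AJ_case.
- move: s3 JAs3 {AJs2 AJAs4}; apply: (prodv_linear_sub (linear_mid u t)) => j b Jj _.
  by rewrite mulA mulIJ ?mulJI ?lI.
- move: s4 AJAs4 {AJs2 JAs3}; apply: (prodv_linear_sub (linear_mid u t)) => x b AJx _.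
  by rewrite mulA AJ_case ?lI.
Qed.

Lemma minimal_graded_ideal_ann_line I : minimal_graded_ideal mul A0 A1 I ->
  (forall a x, x \in I -> mul a x = 0 /\ mul x a = 0) ->
  exists x, [/\ homogeneous x, annihilator_elt mul x & I = <[x]>%VS].
Proof.
case=> [[gI _] nzI _ minI] annI.
have [x [Ix hx nzx]] := graded_homogeneous_nz gI nzI.
have sxI : (<[x]> <= I)%VS by rewrite -memvE.
have ideal_x : graded_ideal mul A0 A1 <[x]>%VS.
  split; first exact: graded_line.
  move=> a y _ /(subvP sxI) Iy; have [-> ->] := annI a y Iy; by rewrite mem0v.
have [x0|xI] := minI _ ideal_x sxI; first by move: (memv_line x); rewrite x0 memv0 (negPf nzx).
by exists x; split=> // a; have [] := annI a x Ix.
Qed.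

Lemma minimal_graded_ideal_simple I : minimal_graded_ideal mul A0 A1 I ->
  prodv I I != 0%VS -> simple_sub mul A0 A1 I.
Proof.
case=> [[gI /two_sided_idealP[lI rI]] _ _ minI] nzII.
have III : prodv I I = I.
  have [II0|//] := minI _ (graded_ideal_prodv gI gI lI rI)
    (prodv_sub_left_ideal I lI (subvv I)).
  by rewrite II0 eqxx in nzII.
split.
  by have [u [w [Iu Iw nz]]] := prodv_neq0_witness nzII; exists u, w.
move=> J sJI gJI idJ.
have gJ : graded J by apply: graded_subspace_of_subv; rewrite {1}gJI addvS // capvS ?capvSr.
have [hull0|hullI] := minI _ (graded_ideal_hull gJ) (ideal_hull_sub lI rI sJI).
  by left; apply/eqP; rewrite -subv0 -hull0; case: (ideal_hull_subv J).
right; apply/eqP; rewrite eqEsubv sJI -{1}III; apply: prodv_sub => u w Iu.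
rewrite -{1}III; apply: prodv_linear_sub => [k x y|s t Is It]; first exact: mul_bil.2.
by apply: (mul_ideal_hull lI rI sJI idJ Iu _ It); rewrite hullI.
Qed.

End Superalgebra.

Section InvariantForm.
Variables (K : fieldType) (V : vectType K) (mul : V -> V -> V) (A0 A1 : {vspace V}).
Variable B : V -> V -> K^o.
Hypotheses (superA : is_assoc_superalgebra mul A0 A1)
  (hssB : is_homogeneous_symmetric_structure mul A0 A1 B).
Local Notation homogeneous := (homogeneous A0 A1).

Let mul_bil : bilinear_op mul. Proof. by case: superA. Qed.
Let A_full : (A0 + A1)%VS = fullv. Proof. by case: superA => _ _ []. Qed.
Let B_bil : bilinear_op B. Proof. by case: hssB. Qed.
Let B_invariant x y z : B (mul x y) z = B x (mul y z). Proof. by case: hssB. Qed.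
Let B_nondeg x : (forall y, B x y = 0) -> x = 0. Proof. by case: hssB => _ _ _ _; apply. Qed.

(* Supersymmetry may flip the sign of one component of [v]; the parity of [B] kills
   the other one. *)
Lemma form_eq0_sym x v : homogeneous x -> B v x = 0 -> B x v = 0.
Proof.
case: hssB => _ B_parity [S00 S01 S10 S11] _ _ hx.
have : v \in (A0 + A1)%VS by rewrite A_full memvf.
case/memv_addP=> v0 A0v0 [v1 A1v1 ->]; rewrite (bilDl B_bil) (bilDr B_bil).
case: hx => [A0x|A1x]; first by rewrite (S00 _ _ A0x A0v0) (S01 _ _ A0x A1v1).
rewrite (S10 _ _ A1x A0v0) (S11 _ _ A1x A1v1).
case: B_parity => [even_B | [_ odd_B]].
  by rewrite (even_B _ _ A0v0 A1x) !add0r => ->; rewrite oppr0.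
by rewrite (odd_B _ _ A1v1 A1x) oppr0.
Qed.

Lemma lann_rann x : (forall y, mul x y = 0) -> forall a, mul a x = 0.
Proof.
move=> xA0 a; apply: B_nondeg => y.
by rewrite B_invariant xA0 (bil0r B_bil).
Qed.

Lemma rann_lann_homogeneous x : homogeneous x ->
  (forall y, mul y x = 0) -> forall a, mul x a = 0.
Proof.
move=> hx Ax0 a; apply: B_nondeg => y.
by rewrite B_invariant; apply: form_eq0_sym => //; rewrite B_invariant Ax0 (bil0r B_bil).
Qed.

Lemma graded_rann_lann I : graded_subspace A0 A1 I ->
  (forall a x, x \in I -> mul a x = 0) -> forall a x, x \in I -> mul x a = 0.
Proof.
move=> gI AI0 a x Ix.
have [x0 [x1 [/memv_capP[Ix0 A0x0] /memv_capP[Ix1 A1x1] ->]]] := graded_decomp gI Ix.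
have ann0 y : y \in I -> homogeneous y -> mul y a = 0.
  by move=> Iy hy; apply: rann_lann_homogeneous hy _ a => z; apply: AI0.
rewrite (bilDl mul_bil) (ann0 x0 Ix0 (or_introl A0x0)).
by rewrite (ann0 x1 Ix1 (or_intror A1x1)) addr0.
Qed.

Lemma minimal_graded_ideal_absorbing_or_ann I : minimal_graded_ideal mul A0 A1 I ->
  (prodv mul fullv I = I /\ I = prodv mul I fullv) \/
  exists x, [/\ homogeneous x, annihilator_elt mul x & I = <[x]>%VS].
Proof.
move=> minI; have [[gI idI] _ _ min] := minI; have /two_sided_idealP[lI rI] := idI.
have gA := graded_fullv A_full.
have [AI0|AII] := min _ (graded_ideal_prodv superA gA gI (left_ideal_fullv mul) rI)
  (prodv_sub_left_ideal fullv lI (subvv I)).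
  right; apply: minimal_graded_ideal_ann_line minI _ => a x Ix.
  have Ax0 b y : y \in I -> mul b y = 0.
    by move=> Iy; apply/eqP; rewrite -memv0 -AI0 (mem_prodv mul_bil) ?memvf.
  by split; [apply: Ax0 | apply: graded_rann_lann gI Ax0 a x Ix].
have [IA0|IAI] := min _ (graded_ideal_prodv superA gI gA lI (right_ideal_fullv mul))
  (prodv_sub_right_ideal fullv rI (subvv I)).
  right; apply: minimal_graded_ideal_ann_line minI _ => a x Ix.
  have xA0 b y : y \in I -> mul y b = 0.
    by move=> Iy; apply/eqP; rewrite -memv0 -IA0 (mem_prodv mul_bil) ?memvf.
  by split; [apply: lann_rann => y; apply: xA0 | apply: xA0].
by left.
Qed.

End InvariantForm.

Theorem mainTheorem8 (K : closedFieldType) (V : vectType K)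
    (mul : V -> V -> V) (A0 A1 : {vspace V}) (B : V -> V -> K^o)
    (I : {vspace V}) :
  [pchar K] =i pred0 ->
  is_assoc_superalgebra mul A0 A1 ->
  is_homogeneous_symmetric_structure mul A0 A1 B ->
  minimal_graded_ideal mul A0 A1 I ->
  [\/ simple_sub mul A0 A1 I,
      null_product mul I /\ prodv mul fullv I = I /\ I = prodv mul I fullv |
      exists x : V, [/\ homogeneous A0 A1 x, annihilator_elt mul x &
                        I = <[x]>%VS]].
Proof.
move=> _ superA hssB minI.
have [II0|nzII] := eqVneq (prodv mul I I) 0%VS; last first.
  by apply: Or31; apply: minimal_graded_ideal_simple.
have null_I : null_product mul I.
  have mul_bil : bilinear_op mul by case: superA.
  by move=> x y Ix Iy; apply/eqP; rewrite -memv0 -II0 (mem_prodv mul_bil).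
have [absorbing|ann] := minimal_graded_ideal_absorbing_or_ann superA hssB minI.
  exact: Or32 (conj null_I absorbing).
exact: Or33 ann.
Qed.
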